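(* Let $X$ be a quasi-lattice and $x,y,z\in X$. Then: (1) $x\tilde\vee x=x\tilde\wedge x=x$. (2) For $\alpha\ge0$, $(\alpha x)\tilde\vee(\alpha y)=\alpha(x\tilde\vee y)$ and $(\alpha x)\tilde\wedge(\alpha y)=\alpha(x\tilde\wedge y)$. (3) For $\alpha\le 0$, $(\alpha x)\tilde\vee(\alpha y)=\alpha(x\tilde\wedge y)$ and $(\alpha x)\tilde\wedge(\alpha y)=\alpha(x\tilde\vee y)$. (4) $(x\tilde\vee y)+z=(x+z)\tilde\vee(y+z)$ and $(x\tilde\wedge y)+z=(x+z)\tilde\wedge(y+z)$. (5) $x^{\pm}\ge0$ and $x^-=(-x)^+$. (6) $\lceil x\rceil\ge0$ and $\lceil\alpha x\rceil=|\alpha|\lceil x\rceil$ for all $\alpha\in\mathbb R$; in particular $\lceil -x\rceil=\lceil x\rceil$. (7) $x=x^+-x^-$, $x^+\tilde\wedge x^-=0$ and $\lceil x\rceil=x^++x^-$. (8) If $x\ge0$, then $x\tilde\wedge 0=0$ and $x=x^+=\lceil x\rceil$. (9) $\lceil\lceil x\rceil\rceil=\lceil x\rceil$. (10) $x\tilde\vee y+x\tilde\wedge y=x+y$ and $x\tilde\vee y-x\tilde\wedge y=\lceil x-y\rceil$. (11) $x\tilde\vee y=\frac12(x+y)+\frac12\lceil x-y\rceil$ and $x\tilde\wedge y=\frac12(x+y)-\frac12\lceil x-y\rceil$.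
   Context: A pre-ordered Banach space is a real Banach space $X$ with a cone $X_+$ ($X_++X_+\subseteq X_+$, $\lambda X_+\subseteq X_+$ for $\lambda\ge0$); $x\le y$ means $y-x\in X_+$. For $A\subseteq X$, $\upsilon(A)$ is the set of upper bounds of $A$ and $\mu(A)$ the set of minimal upper bounds ($z\in\upsilon(A)$ with: $A\le w\le z$ implies $w=z$). Let $\sigma_{x,y}(z)=\|z-x\|+\|z-y\|$. A pre-ordered Banach space with closed cone is a $\upsilon$-quasi-lattice (resp. $\mu$-quasi-lattice) if for all $x,y$ the set $\upsilon(\{x,y\})$ (resp. $\mu(\{x,y\})$) is non-empty and contains a unique minimizer of $\sigma_{x,y}$ over that set, called the quasi-supremum $x\tilde\vee y$. A quasi-lattice is either a $\upsilon$- or a $\mu$-quasi-lattice, with $x\tilde\vee y$ the corresponding quasi-supremum. Define $x\tilde\wedge y:=-((-x)\tilde\vee(-y))$, $\lceil x\rceil:=(-x)\tilde\vee x$, $x^+:=0\tilde\vee x$, $x^-:=0\tilde\vee(-x)$. *)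

From HB Require Import structures.
From mathcomp Require Import all_boot all_order all_algebra.
From mathcomp Require Import all_classical all_reals all_analysis.
Set Implicit Arguments. Unset Strict Implicit. Unset Printing Implicit Defensive.
Import Order.TTheory GRing.Theory Num.Theory.
Import numFieldNormedType.Exports.
Local Open Scope classical_set_scope.
Local Open Scope ring_scope.

Section QL.
Context {R : realType} {X : completeNormedModType R}.

Definition is_cone (C : set X) : Prop :=
  (forall u v, C u -> C v -> C (u + v)) /\
  (forall (l : R) u, 0 <= l -> C u -> C (l *: u)).

Definition cle (C : set X) (x y : X) : Prop := C (y - x).

Definition ubs (C : set X) (x y : X) : set X :=
  [set z | cle C x z /\ cle C y z].

Definition mubs (C : set X) (x y : X) : set X :=
  [set z | ubs C x y z /\
           (forall w, ubs C x y w -> cle C w z -> w = z)].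

Definition sigma (x y z : X) : R := `|z - x| + `|z - y|.

Definition unique_minimizer (S : set X) (x y z : X) : Prop :=
  S z /\ (forall w, S w -> sigma x y z <= sigma x y w) /\
  (forall w, S w -> sigma x y w <= sigma x y z -> w = z).

(* the bound set: mu = false -> upsilon(x,y), mu = true -> mu(x,y) *)
Definition bset (C : set X) (mu : bool) (x y : X) : set X :=
  if mu then mubs C x y else ubs C x y.

(* X (with closed cone C) is a upsilon-/mu-quasi-lattice with quasi-supremum jn:
   for all x y, jn x y is the unique minimizer of sigma_{x,y} over the bound set
   (this includes non-emptiness and existence/uniqueness of the minimizer). *)
Definition quasi_lattice (C : set X) (mu : bool) (jn : X -> X -> X) : Prop :=
  is_cone C /\ closed C /\
  forall x y, unique_minimizer (bset C mu x y) x y (jn x y).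

Definition qmeet (jn : X -> X -> X) (x y : X) : X := - jn (- x) (- y).
Definition qceil (jn : X -> X -> X) (x : X) : X := jn (- x) x.
Definition qpos (jn : X -> X -> X) (x : X) : X := jn 0 x.
Definition qneg (jn : X -> X -> X) (x : X) : X := jn 0 (- x).

End QL.

(* Swapping x and y, and every map w |-> a w + b with a > 0, preserve the order, hence map bound
   sets onto bound sets, and they multiply sigma by a positive constant; so the quasi-supremum is
   symmetric and commutes with them.  Together with [x <= y -> x ~v y = y] this gives
   x ~^ y = x + y - x ~v y  and  ceil (x - y) = 2 (x ~v y) - (x + y)
   (the map w |-> 2 w - (x + y) sends x, y to x - y, y - x), and every item follows by linear
   algebra. *)
From HB Require Import structures.
From mathcomp Require Import all_boot all_order all_algebra.
From mathcomp Require Import all_classical all_reals all_analysis.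
Import Order.TTheory GRing.Theory Num.Theory.
Import numFieldNormedType.Exports.
Local Open Scope classical_set_scope.
Local Open Scope ring_scope.
Set Implicit Arguments. Unset Strict Implicit.

Section AffineMaps.
Context {R : realType} {X : completeNormedModType R}.

Definition aff (a : R) (b w : X) : X := a *: w + b.

Lemma scaler2 (v : X) : 2 *: v = v + v.
Proof. by rewrite scaler_nat mulr2n. Qed.

Lemma affB a b u v : aff a b u - aff a b v = a *: (u - v).
Proof. by rewrite /aff scalerBr opprD addrACA subrr addr0. Qed.

Lemma affK a b : a != 0 -> cancel (aff a b) (aff a^-1 (- (a^-1 *: b))).
Proof. by move=> a0 w; rewrite /aff scalerDr scalerA mulVf // scale1r addrK. Qed.

Lemma affVK a b : a != 0 -> cancel (aff a^-1 (- (a^-1 *: b))) (aff a b).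
Proof.
by move=> a0 w; rewrite /aff scalerDr scalerN !scalerA divff // !scale1r subrK.
Qed.

Lemma sigma_aff a (b x y w : X) : 0 <= a ->
  sigma (aff a b x) (aff a b y) (aff a b w) = a * sigma x y w.
Proof. by move=> a_ge0; rewrite /sigma !affB !normrZ ger0_norm // mulrDr. Qed.

Lemma sigma_sym (x y w : X) : sigma y x w = sigma x y w.
Proof. exact: addrC. Qed.

Lemma unique_minimizer_eq (S : set X) x y z z' :
  unique_minimizer S x y z -> unique_minimizer S x y z' -> z' = z.
Proof. by move=> [Sz [_ zuniq]] [Sz' [z'min _]]; exact: zuniq _ Sz' (z'min _ Sz). Qed.

Lemma unique_minimizer_transport (S S' : set X) x y x' y' z (f g : X -> X) (a : R) :
  0 < a -> cancel g f ->
  (forall w, S w -> S' (f w)) -> (forall w, S' w -> S (g w)) ->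
  (forall w, sigma x' y' (f w) = a * sigma x y w) ->
  unique_minimizer S x y z -> unique_minimizer S' x' y' (f z).
Proof.
move=> a_gt0 gK Sf S'g sigma_f [Sz [zmin zuniq]]; split; first exact: Sf.
split=> w S'w; rewrite -(gK w) !sigma_f ler_pM2l //; first exact/zmin/S'g.
by move=> /(zuniq _ (S'g _ S'w)) ->.
Qed.

End AffineMaps.

Section ConeOrder.
Context {R : realType} {X : completeNormedModType R}.
Variable C : set X.

Lemma ubs_sym x y : ubs C y x = ubs C x y.
Proof. by apply/seteqP; split=> w []. Qed.

Lemma bset_sym mu x y : bset C mu y x = bset C mu x y.
Proof. by rewrite /bset /mubs ubs_sym. Qed.

Lemma cle_oppr0 x : cle C 0 x -> cle C (- x) 0.
Proof. by rewrite /cle sub0r opprK subr0. Qed.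

Lemma bset_order_iso mu (f g : X -> X) : cancel f g -> cancel g f ->
  (forall u v, cle C u v -> cle C (f u) (f v)) ->
  (forall u v, cle C u v -> cle C (g u) (g v)) ->
  forall x y w, bset C mu x y w -> bset C mu (f x) (f y) (f w).
Proof.
move=> fK gK f_mono g_mono x y w; rewrite /bset; case: mu => [|[xw yw]]; last first.
  by split; apply: f_mono.
move=> [[xw yw] wmin]; split; first by split; apply: f_mono.
move=> w' [xw' yw'] w'w; rewrite -(gK w'); congr f; apply: wmin.
  by split; [rewrite -[x]fK | rewrite -[y]fK]; apply: g_mono.
by rewrite -[w]fK; apply: g_mono.
Qed.

Hypothesis coneC : is_cone C.

Lemma cone0 u : C u -> C 0.
Proof. by move=> Cu; rewrite -(scale0r u); apply: coneC.2. Qed.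

Lemma cle_aff a b u v : 0 <= a -> cle C u v -> cle C (aff a b u) (aff a b v).
Proof. by move=> a_ge0 uv; rewrite /cle affB; apply: coneC.2. Qed.

Lemma cle_trans u v w : cle C u v -> cle C v w -> cle C u w.
Proof. by move=> uv vw; rewrite /cle -(subrK v w) -addrA; apply: coneC.1. Qed.

Lemma bset_aff mu a b x y w : 0 < a ->
  bset C mu x y w -> bset C mu (aff a b x) (aff a b y) (aff a b w).
Proof.
move=> a_gt0; have a0 : a != 0 by rewrite gt_eqF.
apply: (bset_order_iso (affK b a0) (affVK b a0)) => u v; apply: cle_aff.
  exact: ltW.
by rewrite invr_ge0 ltW.
Qed.

(* Adding [x <= w] and [-x <= w] gives [0 <= 2 w]; then scale by 1/2. *)
Lemma ubsN_ge0 x w : ubs C (- x) x w -> cle C 0 w.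
Proof.
move=> [Nxw xw]; have := coneC.1 _ _ Nxw xw.
rewrite opprK addrACA subrr addr0 -scaler2 => w2.
rewrite /cle subr0 -[w](scalerK (lt0r_neq0 (ltr0Sn R 1))).
by apply: coneC.2; rewrite // invr_ge0.
Qed.

End ConeOrder.

Section QuasiLattice.
Context {R : realType} {X : completeNormedModType R}.
Variables (C : set X) (mu : bool) (jn : X -> X -> X).
Hypothesis HQ : quasi_lattice C mu jn.

Let coneC : is_cone C := HQ.1.

Lemma jn_minimizer x y : unique_minimizer (bset C mu x y) x y (jn x y).
Proof. exact: HQ.2.2. Qed.

Lemma jn_ubs x y : ubs C x y (jn x y).
Proof. by have [] := jn_minimizer x y; rewrite /bset; case: mu => // -[]. Qed.

Lemma jn_unique x y z : unique_minimizer (bset C mu x y) x y z -> jn x y = z.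
Proof. by move=> zmin; apply: unique_minimizer_eq zmin (jn_minimizer x y). Qed.

Lemma jnC x y : jn y x = jn x y.
Proof.
apply: jn_unique.
apply: (unique_minimizer_transport (f := id) (g := id) (a := 1) ltr01)
  (jn_minimizer x y) => //.
- by move=> w; rewrite bset_sym.
- by move=> w; rewrite bset_sym.
- by move=> w; rewrite mul1r sigma_sym.
Qed.

Lemma jn_aff a b x y : 0 < a -> jn (aff a b x) (aff a b y) = aff a b (jn x y).
Proof.
move=> a_gt0; have a0 : a != 0 by rewrite gt_eqF.
have ainv_gt0 : 0 < a^-1 by rewrite invr_gt0.
apply: jn_unique.
apply: (unique_minimizer_transport a_gt0 (affVK b a0)) (jn_minimizer x y).
- by move=> w; apply: bset_aff.
- by move=> w /(bset_aff coneC (- (a^-1 *: b)) ainv_gt0); rewrite !affK.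
- by move=> w; rewrite sigma_aff // ltW.
Qed.

Lemma jn_of_le x y : cle C x y -> jn x y = y.
Proof.
move=> xy; have yy : cle C y y by rewrite /cle subrr; exact: (cone0 coneC xy).
have := jn_minimizer x y; rewrite /bset; case: mu => [[[[_ yj] jmax] _] | [_ [_ juniq]]].
  by symmetry; apply: jmax.
symmetry; apply: juniq => //; rewrite /sigma subrr normr0 addr0.
have -> : y - x = (jn x y - x) - (jn x y - y) by rewrite opprB [RHS]addrC addrA subrK.
exact: ler_normB.
Qed.

Lemma jnxx x : jn x x = x.
Proof.
have [xj _] := jn_ubs x x.
by apply: jn_of_le; rewrite /cle subrr; exact: (cone0 coneC xj).
Qed.

Lemma jnDr x y z : jn (x + z) (y + z) = jn x y + z.
Proof. by have := jn_aff z x y ltr01; rewrite /aff !scale1r. Qed.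

Lemma jnZ a x y : 0 <= a -> jn (a *: x) (a *: y) = a *: jn x y.
Proof.
rewrite le0r => /orP[/eqP -> | a_gt0]; first by rewrite !scale0r jnxx.
by have := jn_aff 0 x y a_gt0; rewrite /aff !addr0.
Qed.

Lemma qmeetE x y : qmeet jn x y = x + y - jn x y.
Proof.
have Ex : y - (x + y) = - x by rewrite opprD addrCA subrr addr0.
have Ey : x - (x + y) = - y by rewrite opprD addrA subrr add0r.
by rewrite /qmeet -Ex -Ey jnDr jnC opprB.
Qed.

Lemma qceil_sub x y : qceil jn (x - y) = 2 *: jn x y - (x + y).
Proof.
have := jn_aff (- (x + y)) x y (ltr0Sn R 1); rewrite /aff => <-.
rewrite /qceil jnC opprB !scaler2 opprD; congr jn.
  by rewrite addrACA subrr add0r.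
by rewrite addrACA subrr addr0.
Qed.

Lemma qmeetxx x : qmeet jn x x = x.
Proof. by rewrite /qmeet jnxx opprK. Qed.

Lemma qmeetZ a x y : 0 <= a -> qmeet jn (a *: x) (a *: y) = a *: qmeet jn x y.
Proof. by move=> a_ge0; rewrite /qmeet -!scalerN jnZ // scalerN. Qed.

Lemma jnZ_le0 a x y : a <= 0 -> jn (a *: x) (a *: y) = a *: qmeet jn x y.
Proof.
rewrite -oppr_ge0 => Na_ge0.
have scaleNN (v : X) : a *: v = - a *: - v by rewrite scaleNr scalerN opprK.
by rewrite (scaleNN x) (scaleNN y) jnZ // /qmeet scaleNr scalerN.
Qed.

Lemma qmeetZ_le0 a x y : a <= 0 -> qmeet jn (a *: x) (a *: y) = a *: jn x y.
Proof.
rewrite -oppr_ge0 => Na_ge0.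
by rewrite /qmeet -!scaleNr jnZ // scaleNr opprK.
Qed.

Lemma qmeetDr x y z : qmeet jn (x + z) (y + z) = qmeet jn x y + z.
Proof. by rewrite /qmeet !opprD jnDr opprD opprK. Qed.

Lemma qpos_ge0 x : cle C 0 (qpos jn x).
Proof. exact: (jn_ubs 0 x).1. Qed.

Lemma qneg_ge0 x : cle C 0 (qneg jn x).
Proof. exact: (jn_ubs 0 (- x)).1. Qed.

Lemma qceil_ge0 x : cle C 0 (qceil jn x).
Proof. exact: (ubsN_ge0 coneC (jn_ubs (- x) x)). Qed.

Lemma qceilZ a x : qceil jn (a *: x) = `|a| *: qceil jn x.
Proof.
have [a_ge0 | a_lt0] := leP 0 a; first by rewrite /qceil -scalerN jnZ // ger0_norm.
have scaleNN : a *: x = - a *: - x by rewrite scaleNr scalerN opprK.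
by rewrite /qceil -scaleNr scaleNN jnZ ?oppr_ge0 ?ltW // ltr0_norm // jnC.
Qed.

Lemma qceilN x : qceil jn (- x) = qceil jn x.
Proof. by rewrite /qceil opprK jnC. Qed.

Lemma qnegE x : qneg jn x = qpos jn x - x.
Proof. by rewrite /qneg /qpos -jnDr add0r subrr jnC. Qed.

Lemma qpos_sub_qneg x : x = qpos jn x - qneg jn x.
Proof. by rewrite qnegE opprB addrC subrK. Qed.

Lemma qmeet_qpos_qneg x : qmeet jn (qpos jn x) (qneg jn x) = 0.
Proof.
rewrite qnegE (addrC _ (- x)) -{1}[qpos jn x]add0r qmeetDr.
by rewrite /qmeet oppr0 opprK /qpos addNr.
Qed.

Lemma qceil_qpos_qneg x : qceil jn x = qpos jn x + qneg jn x.
Proof.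
by rewrite -[x in LHS]subr0 qceil_sub addr0 jnC qnegE scaler2 addrA.
Qed.

Lemma ge0_qmeetx0 x : cle C 0 x -> qmeet jn x 0 = 0.
Proof.
by move=> x_ge0; rewrite /qmeet oppr0 jn_of_le ?oppr0 //; apply: cle_oppr0.
Qed.

Lemma ge0_qpos x : cle C 0 x -> qpos jn x = x.
Proof. exact: jn_of_le. Qed.

Lemma ge0_qceil x : cle C 0 x -> qceil jn x = x.
Proof. by move=> x_ge0; apply/jn_of_le/(cle_trans coneC (cle_oppr0 x_ge0)). Qed.

Lemma qceil_idem x : qceil jn (qceil jn x) = qceil jn x.
Proof. exact/ge0_qceil/qceil_ge0. Qed.

Lemma jn_add_qmeet x y : jn x y + qmeet jn x y = x + y.
Proof. by rewrite qmeetE addrC subrK. Qed.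

Lemma jn_sub_qmeet x y : jn x y - qmeet jn x y = qceil jn (x - y).
Proof. by rewrite qceil_sub qmeetE opprB addrA scaler2. Qed.

Lemma jn_mid x y : jn x y = 2^-1 *: (x + y) + 2^-1 *: qceil jn (x - y).
Proof.
by rewrite qceil_sub -scalerDr addrC subrK scalerA mulVf ?scale1r // pnatr_eq0.
Qed.

Lemma qmeet_mid x y : qmeet jn x y = 2^-1 *: (x + y) - 2^-1 *: qceil jn (x - y).
Proof.
rewrite qmeetE -scalerBr qceil_sub opprB addrA -scaler2 -scalerBr.
by rewrite scalerA mulVf ?scale1r // pnatr_eq0.
Qed.

End QuasiLattice.

Theorem theorem5p8 (R : realType) (X : completeNormedModType R)
  (C : set X) (mu : bool) (jn : X -> X -> X)
  (HQ : quasi_lattice C mu jn) :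
  forall x y z : X,
  (jn x x = x /\ qmeet jn x x = x) /\
  (forall a : R, 0 <= a ->
     jn (a *: x) (a *: y) = a *: jn x y /\
     qmeet jn (a *: x) (a *: y) = a *: qmeet jn x y) /\
  (forall a : R, a <= 0 ->
     jn (a *: x) (a *: y) = a *: qmeet jn x y /\
     qmeet jn (a *: x) (a *: y) = a *: jn x y) /\
  (jn x y + z = jn (x + z) (y + z) /\
   qmeet jn x y + z = qmeet jn (x + z) (y + z)) /\
  (cle C 0 (qpos jn x) /\ cle C 0 (qneg jn x) /\ qneg jn x = qpos jn (- x)) /\
  (cle C 0 (qceil jn x) /\
   (forall a : R, qceil jn (a *: x) = `|a| *: qceil jn x) /\
   qceil jn (- x) = qceil jn x) /\
  (x = qpos jn x - qneg jn x /\ qmeet jn (qpos jn x) (qneg jn x) = 0 /\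
   qceil jn x = qpos jn x + qneg jn x) /\
  (cle C 0 x -> qmeet jn x 0 = 0 /\ x = qpos jn x /\ x = qceil jn x) /\
  (qceil jn (qceil jn x) = qceil jn x) /\
  (jn x y + qmeet jn x y = x + y /\ jn x y - qmeet jn x y = qceil jn (x - y)) /\
  (jn x y = 2^-1 *: (x + y) + 2^-1 *: qceil jn (x - y) /\
   qmeet jn x y = 2^-1 *: (x + y) - 2^-1 *: qceil jn (x - y)).
Proof.
move=> x y z.
split; first by rewrite (jnxx HQ) (qmeetxx HQ).
split; first by move=> a a_ge0; rewrite (jnZ HQ) // (qmeetZ HQ).
split; first by move=> a a_le0; rewrite (jnZ_le0 HQ) // (qmeetZ_le0 HQ).
split; first by rewrite (jnDr HQ) (qmeetDr HQ).
split; first by split; [exact: (qpos_ge0 HQ x) | split; first exact: (qneg_ge0 HQ x)].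
split.
  by split; [exact: (qceil_ge0 HQ x) | split=> [a|]; rewrite ?(qceilZ HQ) ?(qceilN HQ)].
split; first by rewrite -(qpos_sub_qneg HQ) (qmeet_qpos_qneg HQ) (qceil_qpos_qneg HQ).
split; first by move=> x_ge0; rewrite (ge0_qmeetx0 HQ) ?(ge0_qpos HQ) ?(ge0_qceil HQ).
split; first exact: qceil_idem HQ x.
split; first by rewrite (jn_add_qmeet HQ) (jn_sub_qmeet HQ).
by rewrite -(jn_mid HQ) -(qmeet_mid HQ).
Qed.
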